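(* Let $k$ be an étale cubic algebra over $\mathbb{Q}$ and let $\mathcal{O}\subset\mathcal{O}_k$ be a cubic ring contained in $k$ such that the index $f=(\mathcal{O}_k:\mathcal{O})$ is square free. Then there exists a normalized basis $\{1,\omega,\theta\}$ of $\mathcal{O}_k$ such that $\mathcal{O}=[1,f\omega,\theta]$ and $\mathfrak{f}=[f,f\omega,\theta]$ is the conductor of $\mathcal{O}$. In particular $\mathcal{O}=\mathbb{Z}+\mathfrak{f}$ and $N(\mathfrak{f})=f^2$.
   Context: An étale cubic algebra is a direct sum of number fields of total degree $3$ over $\mathbb{Q}$; $\mathcal{O}_k$ is its maximal order. A cubic ring is a commutative ring with unit, free of rank $3$ as a $\mathbb{Z}$-module. A $\mathbb{Z}$-basis $\{1,\omega,\theta\}$ of a cubic ring is normalized if $\omega\theta\in\mathbb{Z}$. $[\beta_1,\beta_2,\beta_3]$ denotes the $\mathbb{Z}$-module generated by $\beta_1,\beta_2,\beta_3$. The conductor of $\mathcal{O}$ is the largest $\mathcal{O}_k$-ideal contained in $\mathcal{O}$; $N(\mathfrak{f})=(\mathcal{O}_k:\mathfrak{f})$. *)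

From HB Require Import structures.
From mathcomp Require Import all_boot all_order all_algebra all_field.
Set Implicit Arguments. Unset Strict Implicit. Unset Printing Implicit Defensive.
Import Order.TTheory GRing.Theory Num.Theory.
Local Open Scope ring_scope.

Definition kset (k : Type) := k -> Prop.

Section Cubic.
Variable k : falgType rat.

(* An etale cubic algebra over Q: commutative, of dimension 3, reduced
   (in characteristic 0 a finite commutative algebra is etale, i.e. a
   finite product of number fields, iff it is reduced). *)
Definition etale_cubic : Prop :=
  [/\ (forall x y : k, x * y = y * x),
      \dim (fullv : {vspace k}) = 3%N &
      (forall x : k, x ^+ 2 = 0 -> x = 0)].

Definition zspan3 (b1 b2 b3 : k) : kset k :=
  fun x => exists a1 a2 a3 : int, x = b1 *~ a1 + b2 *~ a2 + b3 *~ a3.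

Definition zfree3 (b1 b2 b3 : k) : Prop :=
  forall a1 a2 a3 : int, b1 *~ a1 + b2 *~ a2 + b3 *~ a3 = 0 ->
    [/\ a1 = 0, a2 = 0 & a3 = 0].

Definition kseteq (A B : kset k) : Prop := forall x, A x <-> B x.
Definition ksubset (A B : kset k) : Prop := forall x, A x -> B x.

Definition zbasis3 (A : kset k) (b1 b2 b3 : k) : Prop :=
  kseteq A (zspan3 b1 b2 b3) /\ zfree3 b1 b2 b3.

Definition cubic_ring (O : kset k) : Prop :=
  [/\ O 1, (forall x y, O x -> O y -> O (x - y)),
      (forall x y, O x -> O y -> O (x * y)) &
      exists b1 b2 b3, zbasis3 O b1 b2 b3].

Definition integral_Z (x : k) : Prop :=
  exists p : {poly int}, p \is monic /\ root (map_poly intr p) x.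

Definition maxorder : kset k := integral_Z.

(* (A : B) = n : the subgroup B of A has index n in A (B has exactly n
   cosets in A, represented by the entries of s). *)
Definition has_index (A B : kset k) (n : nat) : Prop :=
  exists s : seq k,
    [/\ size s = n,
        (forall i, (i < n)%N -> A (nth 0 s i)),
        (forall i j, (i < n)%N -> (j < n)%N -> B (nth 0 s i - nth 0 s j) -> i = j) &
        (forall x, A x -> exists2 i, (i < n)%N & B (x - nth 0 s i))].

Definition ideal_of (R I : kset k) : Prop :=
  [/\ ksubset I R, I 0, (forall x y, I x -> I y -> I (x - y)) &
      (forall r x, R r -> I x -> I (r * x))].

Definition is_conductor (O C : kset k) : Prop :=
  [/\ ideal_of maxorder C, ksubset C O &
      forall I, ideal_of maxorder I -> ksubset I O -> ksubset I C].

Definition normalized (w t : k) : Prop := exists c : int, w * t = c%:~R.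

Definition Zplus (A : kset k) : kset k :=
  fun x => exists2 n : int, True & exists2 y, A y & x = n%:~R + y.

End Cubic.

Definition squarefree (n : nat) : Prop :=
  forall p, prime p -> ~~ (p ^ 2 %| n)%N.
Arguments maxorder k : clear implicits.

(* Since (O_k : O) = f, f O_k lies in O. The unit is primitive in O (O meets Q in
   Z), so O = [1, g0, g1]. The classes of f O_k modulo Z form a lattice between
   f (Z g0 + Z g1) and Z g0 + Z g1; by Smith normal form, in a suitable such basis
   it is d0 Z g0 + d1 Z g1 with d0 | d1 | f. Then O_k / O is Z/(f/d0) x Z/(f/d1),
   so d0 d1 = f up to sign; since d0^2 | f and f is squarefree, d0 = 1 and d1 = f
   up to sign. Hence O_k = [1, w, t] with f w = g0 modulo Z and t = g1, and
   O = [1, f w, t]; translating w and t by integers makes w t an integer. In such a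
   basis a + b w + c t lies in O iff f | b, and O_k x lies in O iff x and x w do,
   i.e. iff f | a and f | b: the conductor is [f, f w, t], of index f^2. *)

From HB Require Import structures.
From mathcomp Require Import all_boot all_order all_algebra all_field.
From mathcomp Require Import ring zify.
Import GRing.Theory Num.Theory.
Local Open Scope ring_scope.
Set Implicit Arguments. Unset Strict Implicit. Unset Printing Implicit Defensive.

Section IntegerCombinations.
Variable V : zmodType.

Definition zcomb n (b : 'I_n -> V) (c : 'rV[int]_n) : V := \sum_i b i *~ c 0 i.

Definition zbase_change n (P : 'M[int]_n) (b : 'I_n -> V) : 'I_n -> V :=
  fun i => zcomb b (row i P).

Lemma zcomb_change n (P : 'M[int]_n) b c :
  zcomb (zbase_change P b) c = zcomb b (c *m P).
Proof.
rewrite /zcomb /zbase_change; under eq_bigr => i _ do rewrite mulrz_suml.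
rewrite exchange_big /=; apply: eq_bigr => j _.
rewrite !mxE mulrz_sumr; apply: eq_bigr => i _.
by rewrite !mxE -mulrzA mulrC.
Qed.

Lemma zcomb0 n (b : 'I_n -> V) : zcomb b 0 = 0.
Proof. by rewrite /zcomb big1 // => i _; rewrite mxE mulr0z. Qed.

Lemma zcombD n (b : 'I_n -> V) c1 c2 : zcomb b (c1 + c2) = zcomb b c1 + zcomb b c2.
Proof. by rewrite /zcomb -big_split; apply: eq_bigr => i _; rewrite mxE mulrzDr. Qed.

Lemma zcombZ n (b : 'I_n -> V) (a : int) c : zcomb b (a *: c) = zcomb b c *~ a.
Proof. by rewrite /zcomb mulrz_suml; apply: eq_bigr => i _; rewrite mxE mulrzA_C. Qed.

Lemma zcombB n (b : 'I_n -> V) c1 c2 : zcomb b (c1 - c2) = zcomb b c1 - zcomb b c2.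
Proof. by rewrite /zcomb -sumrB; apply: eq_bigr => i _; rewrite !mxE mulrzBr. Qed.

Lemma zcomb_delta n (b : 'I_n -> V) j : zcomb b (delta_mx 0 j) = b j.
Proof.
rewrite /zcomb (bigD1 j) //= mxE !eqxx mulr1z big1 ?addr0 // => i ij.
by rewrite mxE (negPf ij) andbF mulr0z.
Qed.

Lemma zcomb2 (b : 'I_2 -> V) c : zcomb b c = b 0 *~ c 0 0 + b 1 *~ c 0 1.
Proof.
by rewrite /zcomb !big_ord_recl big_ord0 addr0; congr (_ + b _ *~ c 0 _); apply: val_inj.
Qed.

Lemma zcomb3 (b : 'I_3 -> V) c :
  zcomb b c = b 0 *~ c 0 0 + b 1 *~ c 0 1 + b 2 *~ c 0 2.
Proof.
rewrite /zcomb !big_ord_recl big_ord0 addr0 addrA.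
by congr (_ + b _ *~ c 0 _ + b _ *~ c 0 _); apply: val_inj.
Qed.

Lemma zcomb_change_span n (P : 'M[int]_n) b x : P \in unitmx ->
  (exists c, x = zcomb b c) <-> (exists c, x = zcomb (zbase_change P b) c).
Proof.
move=> uP; split; case=> c ->.
  by exists (c *m invmx P); rewrite zcomb_change -mulmxA mulVmx // mulmx1.
by exists (c *m P); rewrite zcomb_change.
Qed.

Lemma zcomb_change_free n (P : 'M[int]_n) b : P \in unitmx ->
  (forall c, zcomb b c = 0 -> c = 0) ->
  forall c, zcomb (zbase_change P b) c = 0 -> c = 0.
Proof.
move=> uP bfree c; rewrite zcomb_change => /bfree cP0.
by rewrite -[c]mulmx1 -(mulmxV uP) mulmxA cP0 mul0mx.
Qed.

End IntegerCombinations.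

Lemma rowspan_Smith n p (S : 'M[int]_(n + p, n)) :
  exists R : 'M[int]_n, exists2 d : seq int, R \in unitmx /\ sorted dvdz d &
    forall r, (exists y, r = y *m S) <-> exists c : 'rV_n, r = \row_j (c 0 j * d`_j) *m R.
Proof.
have [L uL [R uR [d sd defS]]] := int_Smith_normal_form S.
exists R, d => //; set D := \matrix_(i, j) _ in defS.
have DE (y : 'rV_(n + p)) : y *m D = \row_j (y 0 (lshift p j) * d`_j).
  apply/rowP => j; rewrite !mxE (bigD1 (lshift p j)) //= mxE eqxx mulr1n.
  rewrite big1 ?addr0 // => i ij; rewrite mxE; case: eqP => [e|]; last by rewrite mulr0n mulr0.
  by case/eqP: ij; apply: val_inj.
move=> r; split=> [[y ->]|[c ->]].
  exists (\row_j (y *m L) 0 (lshift p j)); rewrite defS !mulmxA DE.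
  by congr (_ *m _); apply/rowP => j; rewrite !mxE.
exists (row_mx c 0 *m invmx L); rewrite defS !mulmxA mulmxKV // DE.
by congr (_ *m _); apply/rowP => j; rewrite mxE [in RHS]mxE row_mxEl.
Qed.

Lemma squarefree_dvdn_mul (f d0 d1 : nat) :
  squarefree f -> (d0 %| d1)%N -> (d0 * d1)%N = f -> d0 = 1%N.
Proof.
move=> sqf /dvdnP [q ->] e.
have sq_dvd : (d0 ^ 2 %| f)%N by rewrite -e mulnCA expnS expn1 dvdn_mull.
have [d0_le1|d0_gt1] := leqP d0 1; last first.
  by have := sqf _ (pdiv_prime d0_gt1); rewrite (dvdn_trans _ sq_dvd) // dvdn_exp2r // pdiv_dvd.
case: (posnP d0) => [d00|]; last by lia.
by move: e; rewrite d00 muln0 => f0; have := sqf 2 isT; rewrite -f0 dvdn0.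
Qed.

Lemma dvdz_lt_eq (e : int) (i j : nat) :
  (i < `|e|)%N -> (j < `|e|)%N -> (e %| i%:Z - j%:Z)%Z -> i = j.
Proof.
move=> lt_ie lt_je; rewrite -eqz_mod_dvd -!(modz_abs _ e) !modz_small; last 2 first.
- by apply/andP; split; [exact: (leq0n i) | rewrite ltz_nat].
- by apply/andP; split; [exact: (leq0n j) | rewrite ltz_nat].
by move/eqP=> [].
Qed.

Lemma absz_modz_lt (m e : int) : e != 0 -> (`|(m %% e)%Z| < `|e|)%N.
Proof. by move=> e0; have := ltz_mod m e0; have := modz_ge0 m e0; lia. Qed.

Lemma absz1_sqr (m : int) : `|m|%N = 1%N -> m * m = 1.
Proof. by move=> m1; nia. Qed.

Section Index.
Variable k : falgType rat.

Definition kgroup (B : kset k) : Prop := B 0 /\ forall x y, B x -> B y -> B (x - y).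

Section Subgroup.
Variables (B : kset k) (Bgroup : kgroup B).

Lemma kgroupN x : B x -> B (- x).
Proof. by case: Bgroup => B0 BB Bx; rewrite -sub0r; apply: BB. Qed.

Lemma kgroupD x y : B x -> B y -> B (x + y).
Proof. by move=> Bx /kgroupN By; rewrite -[y]opprK; apply: Bgroup.2. Qed.

Lemma kgroupMn x n : B x -> B (x *+ n).
Proof. by move=> Bx; elim: n => [|n IHn]; [exact: Bgroup.1 | rewrite mulrS; exact: kgroupD]. Qed.

Lemma kgroupMz x n : B x -> B (x *~ n).
Proof.
by move=> Bx; case: n => n; [exact: kgroupMn | rewrite NegzE mulrNz; exact/kgroupN/kgroupMn].
Qed.

Lemma kgroup_sum (I : finType) (F : I -> k) : (forall i, B (F i)) -> B (\sum_i F i).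
Proof. by move=> BF; apply: (big_ind B) => //; [exact: Bgroup.1 | exact: kgroupD]. Qed.

End Subgroup.

(* Lagrange: x + s_i runs through the coset representatives s_(sg i) once each, so
   summing over i leaves n x in B. *)
Lemma has_index_mulrn (A B : kset k) n x :
  (forall x y, A x -> A y -> A (x + y)) -> kgroup B -> has_index A B n ->
  A x -> B (x *+ n).
Proof.
move=> AD Bgroup [s [_ As s_inj s_cover]] Ax.
have /fin_all_exists [sg sgP] : forall i : 'I_n, exists j : 'I_n, B (x + s`_i - s`_j).
  move=> i; have [j ltjn Bj] := s_cover _ (AD _ _ Ax (As _ (ltn_ord i))).
  by exists (Ordinal ltjn).
have sg_inj : injective sg.
  move=> i i' e; apply: val_inj; apply: s_inj; [exact: ltn_ord | exact: ltn_ord |].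
  have := Bgroup.2 _ _ (sgP i) (sgP i').
  by rewrite e opprB subrKA [x + _]addrC addrKA.
have := kgroup_sum Bgroup sgP.
rewrite sumrB big_split /= sumr_const card_ord.
have -> : \sum_(i < n) s`_(sg i) = \sum_(i < n) s`_i by rewrite [RHS](reindex_inj sg_inj).
by rewrite addrK.
Qed.

Lemma has_index_card (A B : kset k) n (T : finType) (r : T -> k) :
  (forall x y, B x -> B y -> B (x - y)) -> has_index A B n ->
  (forall t, A (r t)) -> (forall t t', B (r t - r t') -> t = t') ->
  (forall x, A x -> exists t, B (x - r t)) -> #|T| = n.
Proof.
move=> BB [s [_ As s_inj s_cover]] Ar r_inj r_cover.
have /fin_all_exists [F FP] : forall t, exists i : 'I_n, B (r t - s`_i).
  by move=> t; have [i ltin Bi] := s_cover _ (Ar t); exists (Ordinal ltin).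
have /fin_all_exists [G GP] : forall i : 'I_n, exists t, B (s`_i - r t).
  by move=> i; exact: r_cover (As _ (ltn_ord i)).
have F_inj : injective F.
  by move=> t t' e; apply: r_inj; have := BB _ _ (FP t) (FP t'); rewrite e opprB subrKA.
have G_inj : injective G.
  move=> i i' e; apply: val_inj; apply: s_inj; [exact: ltn_ord | exact: ltn_ord |].
  by have := BB _ _ (GP i) (GP i'); rewrite e opprB subrKA.
by have := leq_card F F_inj; have := leq_card G G_inj; rewrite card_ord; lia.
Qed.

Lemma has_index_codom (A B : kset k) (T : finType) (r : T -> k) :
  (forall t, A (r t)) -> (forall t t', B (r t - r t') -> t = t') ->
  (forall x, A x -> exists t, B (x - r t)) -> has_index A B #|T|.
Proof.
move=> Ar r_inj r_cover; exists (codom r); split=> [|i lt_iT|i j lt_iT lt_jT|x /r_cover [t Bt]].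
- exact: size_codom.
- by rewrite -[i]/(val (Ordinal lt_iT)) nth_codom.
- rewrite -[i]/(val (Ordinal lt_iT)) -[j]/(val (Ordinal lt_jT)) !nth_codom.
  by move/r_inj/enum_val_inj => [].
- by exists (enum_rank t); rewrite // nth_codom enum_rankK.
Qed.

Lemma integral_Z_int (x : k) (g a : int) :
  g != 0 -> integral_Z x -> x *~ g = a%:~R -> exists m : int, x = m%:~R.
Proof.
move=> g0 [p [mp rp]] xg.
set r : rat := a%:~R / g%:~R.
have xr : x = r%:A.
  apply: (@scalerI rat k (g%:~R : rat)); first by rewrite intr_eq0.
  by rewrite scalerA mulrCA mulfV ?intr_eq0 // mulr1 scaler_int xg -scaler_int.
have pQ : map_poly (intr : int -> k) p = map_poly (in_alg k) (map_poly intr p).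
  by rewrite -map_poly_comp; apply: eq_map_poly => n /=; rewrite -scaler_int.
have rr : root (map_poly (intr : int -> rat) p) r.
  move: rp; rewrite pQ xr /root horner_map /= => /eqP.
  by move/eqP; rewrite scaler_eq0 oner_eq0 orbF.
have r_Aint : ratr r \in Aint.
  apply: (root_monic_Aint (p := map_poly (intr : int -> algC) p)); last 2 first.
  - exact: monic_map.
  - by apply/polyOverP => i; rewrite coef_map /= rpred_int.
  have -> : map_poly (intr : int -> algC) p = map_poly ratr (map_poly intr p).
    by rewrite -map_poly_comp; apply: eq_map_poly => n /=; rewrite rmorph_int.
  by rewrite fmorph_root.
have /intrP [m rm] := Cint_rat_Aint (Crat_rat r) r_Aint.
exists m; rewrite xr -scaler_int; congr (_ *: _).
by apply: (fmorph_inj (ratr : {rmorphism rat -> algC})); rewrite /= rm rmorph_int.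
Qed.

End Index.

Definition row2 (a0 a1 : int) : 'rV[int]_2 := \row_(i < 2) [:: a0; a1]`_i.
Definition row3 (a0 a1 a2 : int) : 'rV[int]_3 := \row_(i < 3) [:: a0; a1; a2]`_i.

Lemma row2_eta (r : 'rV[int]_2) : r = row2 (r 0 0) (r 0 1).
Proof. by apply/rowP => -[[|[|]] //= ?]; rewrite mxE /=; congr (r 0 _); apply: val_inj. Qed.

Lemma row3_eta (r : 'rV[int]_3) : r = row3 (r 0 0) (r 0 1) (r 0 2).
Proof. by apply/rowP => -[[|[|[|]]] //= ?]; rewrite mxE /=; congr (r 0 _); apply: val_inj. Qed.

Section Commutative.
Variable k : falgType rat.
Hypothesis kC : commutative (@GRing.mul k).

(* [k] with its commutative ring structure: [ring] only applies to terms typed in [kc]. *)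
Definition kc : Type := k.
HB.instance Definition _ := GRing.NzRing.on kc.
HB.instance Definition _ := GRing.PzRing_hasCommutativeMul.Build kc kC.

Local Notation Ok := (maxorder k).

Lemma zspan3E (b1 b2 b3 x : kc) :
  zspan3 b1 b2 b3 x <-> exists a1 a2 a3 : int, x = b1 *~ a1 + b2 *~ a2 + b3 *~ a3.
Proof. by []. Qed.

Lemma zfree3E (b1 b2 b3 : kc) : zfree3 b1 b2 b3 <->
  forall a1 a2 a3 : int, b1 *~ a1 + b2 *~ a2 + b3 *~ a3 = 0 -> [/\ a1 = 0, a2 = 0 & a3 = 0].
Proof. by []. Qed.

Lemma zfree3_inj (b1 b2 b3 : kc) a1 a2 a3 c1 c2 c3 : zfree3 b1 b2 b3 ->
  b1 *~ a1 + b2 *~ a2 + b3 *~ a3 = b1 *~ c1 + b2 *~ c2 + b3 *~ c3 ->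
  [/\ a1 = c1, a2 = c2 & a3 = c3].
Proof.
move=> /zfree3E bfree e.
have : b1 *~ (a1 - c1) + b2 *~ (a2 - c2) + b3 *~ (a3 - c3) =
       (b1 *~ a1 + b2 *~ a2 + b3 *~ a3) - (b1 *~ c1 + b2 *~ c2 + b3 *~ c3) by ring.
by rewrite e subrr => /bfree [/subr0_eq -> /subr0_eq -> /subr0_eq ->].
Qed.

Definition vec2 (u v : kc) : 'I_2 -> kc := fun i => [:: u; v]`_i.
Definition vec3 (b0 b1 b2 : kc) : 'I_3 -> kc := fun i => [:: b0; b1; b2]`_i.

Definition zbasis1 (O : kset k) (b : 'I_2 -> kc) : Prop :=
  (forall x, O x <-> exists a c, x = a%:~R + zcomb b c) /\
  (forall a c, a%:~R + zcomb b c = 0 -> a = 0 /\ c = 0).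

Lemma zcomb_vec2 u v c : zcomb (vec2 u v) c = u *~ c 0 0 + v *~ c 0 1.
Proof. by rewrite zcomb2. Qed.

Lemma zcomb_vec3 b0 b1 b2 c : zcomb (vec3 b0 b1 b2) c = b0 *~ c 0 0 + b1 *~ c 0 1 + b2 *~ c 0 2.
Proof. by rewrite zcomb3. Qed.

Lemma zbasis3_vec2 (O : kset k) u v : zbasis3 O 1 u v <-> zbasis1 O (vec2 u v).
Proof.
split=> [[Ospan /zfree3E free]|[Ospan free]]; split.
- move=> x; split=> [/Ospan/zspan3E [a [b [c ->]]]|[a [c ->]]].
    by exists a, (row2 b c); rewrite zcomb_vec2 !mxE addrA.
  by apply/Ospan/zspan3E; exists a, (c 0 0), (c 0 1); rewrite zcomb_vec2 addrA.
- move=> a c; rewrite zcomb_vec2 addrA => /free [-> c0 c1]; split=> //.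
  by rewrite (row2_eta c) c0 c1; apply/rowP => -[[|[|]] //= ?]; rewrite !mxE.
- move=> x; split=> [/Ospan [a [c ->]]|/zspan3E [a [b [c ->]]]].
    by apply/zspan3E; exists a, (c 0 0), (c 0 1); rewrite zcomb_vec2 addrA.
  by apply/Ospan; exists a, (row2 b c); rewrite zcomb_vec2 !mxE addrA.
- apply/zfree3E => a b c; have := free a (row2 b c).
  rewrite zcomb_vec2 !mxE /= addrA => abc0 /abc0 [-> /rowP bc0].
  by have := bc0 0; have := bc0 1; rewrite !mxE /= => -> ->.
Qed.

Lemma zbasis1_inj (O : kset k) b a c a' c' :
  zbasis1 O b -> a%:~R + zcomb b c = a'%:~R + zcomb b c' -> a = a' /\ c = c'.
Proof.
case=> _ free e; have := free (a - a') (c - c').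
have -> : (a - a')%:~R + zcomb b (c - c') = a%:~R + zcomb b c - (a'%:~R + zcomb b c').
  by rewrite zcombB intrB; ring.
by rewrite e subrr => /(_ erefl) [/subr0_eq -> /subr0_eq ->].
Qed.

Lemma zbasis1_vec2_eta (O : kset k) b : zbasis1 O b -> zbasis1 O (vec2 (b 0) (b 1)).
Proof.
have bE c : zcomb (vec2 (b 0) (b 1)) c = zcomb b c by rewrite zcomb_vec2 zcomb2.
case=> Ospan free; split=> [x|a c]; last by rewrite bE; exact: free.
by rewrite Ospan; split=> -[a [c ->]]; exists a, c; rewrite bE.
Qed.

Lemma zbasis1_change (O : kset k) b (R : 'M[int]_2) :
  R \in unitmx -> zbasis1 O b -> zbasis1 O (zbase_change R b).
Proof.
move=> uR [Ospan free]; split=> [x|a c].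
  rewrite Ospan; split=> -[a [c ->]]; last by exists a, (c *m R); rewrite zcomb_change.
  by exists a, (c *m invmx R); rewrite zcomb_change mulmxKV.
rewrite zcomb_change => /free [-> cR0]; split=> //.
by rewrite -[c]mulmx1 -(mulmxV uR) mulmxA cR0 mul0mx.
Qed.

Lemma maxorderE (x : kc) : Ok x <-> integralOver (intr : int -> kc) x.
Proof. by split=> [[p [mp rp]]|[p mp rp]]; exists p. Qed.

Lemma maxorderB (x y : kc) : Ok x -> Ok y -> Ok (x - y).
Proof. by move=> /maxorderE Ox /maxorderE Oy; apply/maxorderE/integral_sub. Qed.

Lemma maxorderD (x y : kc) : Ok x -> Ok y -> Ok (x + y).
Proof. by move=> /maxorderE Ox /maxorderE Oy; apply/maxorderE/integral_add. Qed.

Lemma maxorderM (x y : kc) : Ok x -> Ok y -> Ok (x * y).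
Proof. by move=> /maxorderE Ox /maxorderE Oy; apply/maxorderE/integral_mul. Qed.

Lemma maxorder_int (n : int) : Ok (n%:~R : kc).
Proof. exact/maxorderE/(integral_id (intr : {rmorphism int -> kc})). Qed.

Lemma maxorder_kgroup : kgroup Ok.
Proof. by split; [exact: (maxorder_int 0) | exact: maxorderB]. Qed.

Lemma maxorderMz (x : kc) n : Ok x -> Ok (x *~ n).
Proof. exact: (kgroupMz maxorder_kgroup n). Qed.

Lemma maxorderMn (x : kc) n : Ok x -> Ok (x *+ n).
Proof. exact: (kgroupMn maxorder_kgroup n). Qed.

Lemma zspan3_shift (w t : kc) (n m : int) (l : nat) x :
  zspan3 1 ((w - n%:~R) *+ l) (t - m%:~R) x <-> zspan3 1 (w *+ l) t x.
Proof.
rewrite !zspan3E; split=> -[a [b [c ->]]].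
  by exists (a - n * l%:Z * b - m * c), b, c; rewrite !pmulrn; ring.
by exists (a + n * l%:Z * b + m * c), b, c; rewrite !pmulrn; ring.
Qed.

Lemma zfree3_shift (w t : kc) (n m : int) :
  zfree3 1 w t -> zfree3 1 (w - n%:~R) (t - m%:~R).
Proof.
move=> /zfree3E wt_free; apply/zfree3E => a b c abc0.
have [|+ b0 c0] := wt_free (a - n * b - m * c) b c; first by rewrite -abc0; ring.
by rewrite b0 c0 !mulr0 !subr0.
Qed.

(* [w t = c0 + c1 w + c2 t] gives [(w - c2) (t - c1) = c0 + c1 c2]. *)
Lemma normalizing_shift (w t : kc) : zbasis3 Ok 1 w t ->
  exists n m c : int, (w - n%:~R) * (t - m%:~R) = c%:~R.
Proof.
case=> span _; have Ow : Ok w by apply/span/zspan3E; exists 0, 1, 0; ring.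
have Ot : Ok t by apply/span/zspan3E; exists 0, 0, 1; ring.
have /span/zspan3E [c0 [c1 [c2 wtE]]] := maxorderM Ow Ot.
exists c2, c1, (c0 + c1 * c2).
transitivity (w * t - w *~ c1 - t *~ c2 + (c1 * c2)%:~R); first ring.
by rewrite wtE; ring.
Qed.

Section Order.
Variable O : kset k.
Hypotheses (O1 : O 1) (OB : forall x y : kc, O x -> O y -> O (x - y)).
Hypotheses (OM : forall x y : kc, O x -> O y -> O (x * y)) (O_Ok : ksubset O Ok).

Lemma O_kgroup : kgroup O.
Proof. by split => //; rewrite -(subrr (1 : kc)); apply: OB. Qed.

Lemma O_add (x y : kc) : O x -> O y -> O (x + y).
Proof. exact: (kgroupD O_kgroup). Qed.

Lemma O_mulz (x : kc) n : O x -> O (x *~ n).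
Proof. exact: (kgroupMz O_kgroup n). Qed.

Lemma O_int (n : int) : O (n%:~R : kc).
Proof. exact: O_mulz. Qed.

(* Since [O] meets [Q] in [Z], the unit is primitive in [O]: after a unimodular
   change of basis making it a multiple of the first basis vector, that vector is
   an integer [m] with [m * g = 1]. *)
Lemma cubic_ring_basis1 b1 b2 b3 : zbasis3 O b1 b2 b3 -> exists u v : kc, zbasis3 O 1 u v.
Proof.
case=> Ospan bfree; set b := vec3 b1 b2 b3.
have Ob x : O x <-> exists c, x = zcomb b c.
  split=> [/Ospan [a1 [a2 [a3 ->]]]|[c ->]].
    by exists (row3 a1 a2 a3); rewrite zcomb_vec3 !mxE.
  by apply/Ospan; exists (c 0 0), (c 0 1), (c 0 2); rewrite zcomb_vec3.
have b_free c : zcomb b c = 0 -> c = 0.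
  rewrite zcomb_vec3 => /bfree [c0 c1 c2]; rewrite (row3_eta c) c0 c1 c2.
  by apply/rowP => -[[|[|[|]]] //= ?]; rewrite !mxE.
have [c1 c1E] : exists c, 1 = zcomb b c by apply/Ob.
have [L _ [R uR [d _ defc1]]] := int_Smith_normal_form c1.
set e := zbase_change R b; set g := L 0 0 * d`_0.
have e_span x : O x <-> exists c, x = zcomb e c by rewrite Ob; exact: zcomb_change_span.
have e_free c : zcomb e c = 0 -> c = 0 := zcomb_change_free uR b_free (c := c).
have e0g : 1 = e 0 *~ g.
  rewrite c1E defc1 -zcomb_change zcomb3 !mxE !big_ord1 !mxE /=.
  by rewrite mulr1n !mulr0n !mulr0 !mulr0z !addr0.
have g0 : g != 0 by apply: contra_eq_neq e0g => ->; rewrite mulr0z; exact: oner_neq0.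
have Oe0 : O (e 0) by apply/Ob; exists (row 0 R).
have [m e0m] : exists m : int, e 0 = m%:~R.
  by apply: (integral_Z_int (a := 1) g0 (O_Ok Oe0)); rewrite -e0g.
exists (e 1), (e 2); split.
  move=> x; rewrite e_span; split=> [[c ->]|/zspan3E [a [b1' [b2' ->]]]].
    by apply/zspan3E; exists (m * c 0 0), (c 0 1), (c 0 2); rewrite zcomb3 e0m; ring.
  by exists (row3 (a * g) b1' b2'); rewrite zcomb3 !mxE /= [a * g]mulrC mulrzA -e0g.
apply/zfree3E => a b1' b2' abb0.
have := e_free (row3 (a * g) b1' b2').
rewrite zcomb3 !mxE /= [a * g]mulrC mulrzA -e0g abb0 => /(_ erefl) /rowP c0.
move: (c0 0) (c0 1) (c0 2); rewrite !mxE /= => /eqP.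
by rewrite mulf_eq0 (negPf g0) => /eqP -> -> ->.
Qed.

Variable f : nat.
Hypothesis Oindex : has_index Ok O f.

Lemma index_gt0 : (0 < f)%N.
Proof. by case: Oindex => s [_ _ _ cover]; have [i lt_if _] := cover _ (maxorder_int 0); lia. Qed.

Lemma maxorder_mulrn (x : kc) : Ok x -> O (x *+ f).
Proof. exact: has_index_mulrn maxorderD O_kgroup Oindex. Qed.

Lemma maxorder_mulrn_int (y : kc) (a : int) :
  Ok y -> y *+ f = a%:~R -> exists m : int, y = m%:~R.
Proof. by apply: (integral_Z_int (g := f%:Z)); have := index_gt0; lia. Qed.

Lemma f_neq0 : f%:Z != 0.
Proof. by rewrite eqz_nat -lt0n index_gt0. Qed.

Definition fOk_row (b : 'I_2 -> kc) (r : 'rV[int]_2) : Prop :=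
  exists (z : kc) (a : int), Ok z /\ z *+ f = a%:~R + zcomb b r.

Lemma fOk_row_change (R : 'M[int]_2) b r :
  fOk_row (zbase_change R b) r <-> fOk_row b (r *m R).
Proof. by rewrite /fOk_row zcomb_change. Qed.

Lemma fOk_row_mulmx b q (M : 'M[int]_(q, 2)) y :
  (forall i, fOk_row b (row i M)) -> fOk_row b (y *m M).
Proof.
move=> Mrows; rewrite mulmx_sum_row; apply: (big_ind (fOk_row b)).
- by exists 0, 0; split; [exact: (maxorder_int 0) | rewrite mul0rn zcomb0 addr0].
- move=> r1 r2 [z1 [a1 [Oz1 e1]]] [z2 [a2 [Oz2 e2]]].
  exists (z1 + z2), (a1 + a2); split; first exact: maxorderD.
  by rewrite mulrnDl e1 e2 zcombD intrD; ring.
- move=> i _; have [z [a [Oz e]]] := Mrows i.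
  exists (z *~ y 0 i), (a * y 0 i); split; first exact: maxorderMz.
  have -> : z *~ y 0 i *+ f = (z *+ f) *~ y 0 i by rewrite !pmulrn; ring.
  by rewrite e zcombZ intrM; ring.
Qed.

Lemma fOk_row_rowspan b : zbasis1 O b ->
  exists p (S : 'M[int]_(2 + p, 2)), forall r, fOk_row b r <-> exists y, r = y *m S.
Proof.
move=> Obasis; have [Ospan _] := Obasis.
case: Oindex => s [_ s_Ok _ s_cover].
have /fin_all_exists [C CP] :
    forall i : 'I_f, exists c, exists a : int, s`_i *+ f = a%:~R + zcomb b c.
  by move=> i; have /Ospan [a [c e]] := maxorder_mulrn (s_Ok _ (ltn_ord i)); exists c, a.
exists f, (col_mx (f%:Z)%:M (\matrix_i C i)) => r; split.
  case=> z [a [Oz e]]; have [i lt_if /Ospan [o [oc eo]]] := s_cover _ Oz.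
  have [ca eC] := CP (Ordinal lt_if).
  exists (row_mx oc (delta_mx 0 (Ordinal lt_if))).
  rewrite mul_row_col mul_mx_scalar -rowE rowK.
  suff /(zbasis1_inj Obasis) [_ ->] :
    a%:~R + zcomb b r = (ca + o * f%:Z)%:~R + zcomb b (f%:Z *: oc + C (Ordinal lt_if)) by [].
  rewrite -e zcombD zcombZ; have -> : z = s`_i + (z - s`_i) by rewrite addrC subrK.
  by rewrite mulrnDl [s`_i *+ f]eC eo !pmulrn intrD intrM; ring.
case=> y ->; apply: fOk_row_mulmx => i; rewrite -(splitK i); case: (split i) => j /=.
  rewrite rowKu rowE mul_mx_scalar; exists (b j), 0; split.
    by apply/O_Ok/Ospan; exists 0, (delta_mx 0 j); rewrite zcomb_delta add0r.
  by rewrite zcombZ zcomb_delta add0r pmulrn.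
rewrite rowKd rowK; have [a e] := CP j.
by exists s`_j, a; split; first exact: s_Ok (ltn_ord j).
Qed.

(* Smith normal form of the lattice of coordinates of [f Ok] modulo [Z]. *)
Lemma fOk_elementary_divisors u v : zbasis3 O 1 u v ->
  exists (g0 g1 : kc) (d0 d1 : int), [/\ zbasis3 O 1 g0 g1, (d0 %| d1)%Z &
    forall m0 m1 : int, (exists (z : kc) (a : int), Ok z /\ z *+ f = a%:~R + g0 *~ m0 + g1 *~ m1)
      <-> (d0 %| m0)%Z /\ (d1 %| m1)%Z].
Proof.
move=> /zbasis3_vec2 uv_basis; have [p [S SP]] := fOk_row_rowspan uv_basis.
have [R [d [uR sd] RP]] := rowspan_Smith S.
set g := zbase_change R (vec2 u v).
exists (g 0), (g 1), d`_0, d`_1; split.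
- exact/zbasis3_vec2/zbasis1_vec2_eta/zbasis1_change.
- by case: d sd {RP} => [|x [|y r]] /=; rewrite ?dvdz0 // => /andP[].
move=> m0 m1; transitivity (fOk_row g (row2 m0 m1)).
  by split=> -[z [a [Oz e]]]; exists z, a; split=> //; rewrite e zcomb2 !mxE addrA.
rewrite fOk_row_change SP RP; split=> [[c /(can_inj (mulmxK uR)) /rowP c_d]|].
  by have := c_d 0; have := c_d 1; rewrite !mxE /= => -> ->; split; exact: dvdz_mull.
case=> /dvdzP [q0 ->] /dvdzP [q1 ->]; exists (row2 q0 q1); congr (_ *m _).
by apply/rowP => -[[|[|]] //= ?]; rewrite !mxE.
Qed.

Section ElementaryDivisors.
Variables (g0 g1 : kc) (d0 d1 : int).
Hypothesis Obasis : zbasis3 O 1 g0 g1.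
Hypothesis fOk_coordP : forall m0 m1 : int,
  (exists (z : kc) (a : int), Ok z /\ z *+ f = a%:~R + g0 *~ m0 + g1 *~ m1) <->
  (d0 %| m0)%Z /\ (d1 %| m1)%Z.
Variables (z1 z2 : kc) (a1 a2 : int).
Hypotheses (Oz1 : Ok z1) (z1E : z1 *+ f = a1%:~R + g0 *~ d0).
Hypotheses (Oz2 : Ok z2) (z2E : z2 *+ f = a2%:~R + g1 *~ d1).

Lemma Obasis_span (x : kc) : O x <-> exists a b c : int, x = a%:~R + g0 *~ b + g1 *~ c.
Proof. by rewrite (proj1 Obasis x) zspan3E. Qed.

Lemma Og0 : O g0.
Proof. by apply/Obasis_span; exists 0, 1, 0; rewrite !mulr0z mulr1z add0r addr0. Qed.

Lemma Og1 : O g1.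
Proof. by apply/Obasis_span; exists 0, 0, 1; rewrite !mulr0z mulr1z !add0r. Qed.

Lemma d0_dvd_f : (d0 %| f%:Z)%Z.
Proof.
have [] // := proj1 (fOk_coordP f 0); exists g0, 0; split; first exact: O_Ok Og0.
by rewrite mulr0z add0r addr0 pmulrn.
Qed.

Lemma d1_dvd_f : (d1 %| f%:Z)%Z.
Proof.
have [] // := proj1 (fOk_coordP 0 f); exists g1, 0; split; first exact: O_Ok Og1.
by rewrite mulr0z !add0r pmulrn.
Qed.

Let e0 := (f%:Z %/ d0)%Z.
Let e1 := (f%:Z %/ d1)%Z.

Lemma e0d0 : e0 * d0 = f%:Z. Proof. exact: divzK d0_dvd_f. Qed.
Lemma e1d1 : e1 * d1 = f%:Z. Proof. exact: divzK d1_dvd_f. Qed.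

Lemma e0_neq0 : e0 != 0.
Proof. by apply: contra_eq_neq e0d0 => ->; have := index_gt0; rewrite mul0r; lia. Qed.

Lemma e1_neq0 : e1 != 0.
Proof. by apply: contra_eq_neq e1d1 => ->; have := index_gt0; rewrite mul0r; lia. Qed.

Lemma d0_neq0 : d0 != 0.
Proof. by apply: contra_eq_neq e0d0 => ->; have := index_gt0; rewrite mulr0; lia. Qed.

Lemma d1_neq0 : d1 != 0.
Proof. by apply: contra_eq_neq e1d1 => ->; have := index_gt0; rewrite mulr0; lia. Qed.

Lemma O_z1z2 (u v : int) : O (z1 *~ u + z2 *~ v) -> (e0 %| u)%Z /\ (e1 %| v)%Z.
Proof.
case/Obasis_span=> a [b [c uvE]].
have : (a1 * u + a2 * v)%:~R + g0 *~ (d0 * u) + g1 *~ (d1 * v) =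
       (a * f%:Z)%:~R + g0 *~ (b * f%:Z) + g1 *~ (c * f%:Z).
  transitivity ((z1 *+ f) *~ u + (z2 *+ f) *~ v); first by rewrite z1E z2E; ring.
  transitivity ((z1 *~ u + z2 *~ v) *+ f); first by rewrite !pmulrn; ring.
  by rewrite uvE !pmulrn; ring.
case/(zfree3_inj (proj2 Obasis)) => _ du dv.
split; apply/dvdzP; [exists b; apply: (mulfI d0_neq0) | exists c; apply: (mulfI d1_neq0)].
  by rewrite du -e0d0; ring.
by rewrite dv -e1d1; ring.
Qed.

Let rep (t : 'I_`|e0| * 'I_`|e1|) : kc := z1 *+ t.1 + z2 *+ t.2.

Lemma rep_Ok t : Ok (rep t).
Proof. by apply: maxorderD; apply: maxorderMn. Qed.

Lemma rep_inj t t' : O (rep t - rep t') -> t = t'.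
Proof.
case: t t' => [i j] [i' j'].
have -> : rep (i, j) - rep (i', j') = z1 *~ (i%:Z - i'%:Z) + z2 *~ (j%:Z - j'%:Z).
  by rewrite /rep /= !pmulrn; ring.
case/O_z1z2 => /(dvdz_lt_eq (ltn_ord i) (ltn_ord i')) ii /(dvdz_lt_eq (ltn_ord j) (ltn_ord j')) jj.
by congr pair; apply: val_inj.
Qed.

(* With [f x = a + n0 d0 g0 + n1 d1 g1] and [n0 = q0 e0 + r0], [n1 = q1 e1 + r1],
   the element [x - rep (r0, r1) - q0 g0 - q1 g1] has an integer [f]-multiple. *)
Lemma rep_cover (x : kc) : Ok x -> exists t, O (x - rep t).
Proof.
move=> Ox; have /Obasis_span [a [m0 [m1 fxE]]] := maxorder_mulrn Ox.
have [/dvdzP [n0 m0E] /dvdzP [n1 m1E]] : (d0 %| m0)%Z /\ (d1 %| m1)%Z.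
  by apply/fOk_coordP; exists x, a.
have lt_i := absz_modz_lt n0 e0_neq0; have lt_j := absz_modz_lt n1 e1_neq0.
have r0_ge0 := modz_ge0 n0 e0_neq0; have r1_ge0 := modz_ge0 n1 e1_neq0.
have n0E := divz_eq n0 e0; have n1E := divz_eq n1 e1.
set q0 := (n0 %/ e0)%Z in n0E *; set q1 := (n1 %/ e1)%Z in n1E *.
set r0 := (n0 %% e0)%Z in n0E r0_ge0 lt_i *; set r1 := (n1 %% e1)%Z in n1E r1_ge0 lt_j *.
exists (Ordinal lt_i, Ordinal lt_j).
set y : kc := x - rep (Ordinal lt_i, Ordinal lt_j) - g0 *~ q0 - g1 *~ q1.
have Oy : Ok y.
  apply: maxorderB; first apply: maxorderB; first exact: maxorderB (rep_Ok _).
    exact/maxorderMz/O_Ok/Og0.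
  exact/maxorderMz/O_Ok/Og1.
have fyE : y *+ f = (a - a1 * r0 - a2 * r1)%:~R.
  transitivity (x *+ f - (z1 *+ f) *~ r0 - (z2 *+ f) *~ r1
                - g0 *~ (q0 * (e0 * d0)) - g1 *~ (q1 * (e1 * d1))).
    by rewrite e0d0 e1d1 /y /rep /= !pmulrn !gez0_abs //; ring.
  by rewrite fxE z1E z2E m0E m1E n0E n1E; ring.
have [m ym] := maxorder_mulrn_int Oy fyE.
have -> : x - rep (Ordinal lt_i, Ordinal lt_j) = m%:~R + g0 *~ q0 + g1 *~ q1.
  by rewrite -ym /y; ring.
by apply/Obasis_span; exists m, q0, q1.
Qed.

Lemma index_e0e1 : (`|e0| * `|e1|)%N = f.
Proof. by rewrite -(has_index_card OB Oindex rep_Ok rep_inj rep_cover) card_prod !card_ord. Qed.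


Hypotheses (sqf : squarefree f) (d0_dvd_d1 : (d0 %| d1)%Z).

(* [e0 e1 = f = e0 d0] gives [|e1| = |d0|], hence [|d0| |d1| = f] and [d0 ^ 2 | f]. *)
Lemma d0_e1_sqr : d0 * d0 = 1 /\ e1 * e1 = 1.
Proof.
have e0_gt0 : (0 < `|e0|)%N by rewrite absz_gt0 e0_neq0.
have e0d0N : (`|e0| * `|d0|)%N = f by rewrite -abszM e0d0.
have e1d1N : (`|e1| * `|d1|)%N = f by rewrite -abszM e1d1.
have e1_d0 : `|e1|%N = `|d0|%N by apply/eqP; rewrite -(eqn_pmul2l e0_gt0) index_e0e1 e0d0N.
have d0_1 : `|d0|%N = 1%N by apply: squarefree_dvdn_mul sqf d0_dvd_d1 _; rewrite -e1_d0.
by split; apply: absz1_sqr; rewrite ?e1_d0.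
Qed.

Lemma mulrn_z1d0 : z1 *~ d0 *+ f = (a1 * d0)%:~R + g0.
Proof.
transitivity ((a1 * d0)%:~R + g0 *~ (d0 * d0)); last by rewrite (proj1 d0_e1_sqr) mulr1z.
transitivity ((z1 *+ f) *~ d0); first by rewrite !pmulrn; ring.
by rewrite z1E; ring.
Qed.

Lemma maxorder_basis : zbasis3 Ok 1 (z1 *~ d0) g1.
Proof.
split=> [x|]; last first.
  apply/zfree3E => a b c abc0.
  have : (a * f%:Z + a1 * d0 * b)%:~R + g0 *~ b + g1 *~ (c * f%:Z) = 0.
    transitivity ((a%:~R + z1 *~ d0 *~ b + g1 *~ c) *+ f); last by rewrite abc0 mul0rn.
    transitivity ((a * f%:Z)%:~R + (z1 *~ d0 *+ f) *~ b + g1 *~ (c * f%:Z)).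
      by rewrite mulrn_z1d0; ring.
    by rewrite !pmulrn; ring.
  case/(proj2 Obasis)=> /eqP af0 b0 /eqP cf0; rewrite b0 mulr0 addr0 in af0.
  move: af0 cf0; rewrite !mulf_eq0 (negPf f_neq0) !orbF => /eqP a0 /eqP c0.
  by split.
split=> [Ox|/zspan3E [a [b [c ->]]]]; last first.
  apply: maxorderD; first apply: maxorderD; first exact: maxorder_int.
    by do 2!apply: maxorderMz.
  exact/maxorderMz/O_Ok/Og1.
have /Obasis_span [a [m0 [m1 fxE]]] := maxorder_mulrn Ox.
have [_ /dvdzP [n1 m1E]] : (d0 %| m0)%Z /\ (d1 %| m1)%Z by apply/fOk_coordP; exists x, a.
set y : kc := x - z1 *~ d0 *~ m0 - g1 *~ (n1 * e1).
have Oy : Ok y.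
  apply: maxorderB; last exact/maxorderMz/O_Ok/Og1.
  by apply: maxorderB => //; do 2!apply: maxorderMz.
have fyE : y *+ f = (a - a1 * d0 * m0)%:~R.
  transitivity (x *+ f - (z1 *~ d0 *+ f) *~ m0 - g1 *~ (n1 * (e1 * e1) * d1)).
    by rewrite /y !pmulrn -e1d1; ring.
  by rewrite (proj2 d0_e1_sqr) mulr1 mulrn_z1d0 fxE m1E; ring.
have [m ym] := maxorder_mulrn_int Oy fyE.
by apply/zspan3E; exists m, m0, (n1 * e1); rewrite -ym /y; ring.
Qed.

Lemma O_basis : kseteq O (zspan3 1 (z1 *~ d0 *+ f) g1).
Proof.
move=> x; rewrite Obasis_span zspan3E mulrn_z1d0; split=> -[a [b [c ->]]].
  by exists (a - a1 * d0 * b), b, c; ring.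
by exists (a + a1 * d0 * b), b, c; ring.
Qed.

End ElementaryDivisors.

Lemma squarefree_index_basis u v : squarefree f -> zbasis3 O 1 u v ->
  exists w t : kc, zbasis3 Ok 1 w t /\ kseteq O (zspan3 1 (w *+ f) t).
Proof.
move=> sqf /fOk_elementary_divisors [g0 [g1 [d0 [d1 [g_basis d0_d1 coordP]]]]].
have [z1 [a1 [Oz1]]] : exists (z1 : kc) (a1 : int), Ok z1 /\ z1 *+ f = a1%:~R + g0 *~ d0 + g1 *~ 0.
  by apply/coordP; rewrite dvdzz dvdz0.
have [z2 [a2 [Oz2]]] : exists (z2 : kc) (a2 : int), Ok z2 /\ z2 *+ f = a2%:~R + g0 *~ 0 + g1 *~ d1.
  by apply/coordP; rewrite dvdzz dvdz0.
rewrite mulr0z addr0 => z2E; rewrite mulr0z addr0 => z1E.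
exists (z1 *~ d0), g1; split.
  exact: (maxorder_basis g_basis coordP Oz1 z1E Oz2 z2E sqf d0_d1).
exact: (O_basis g_basis coordP Oz1 z1E Oz2 z2E sqf d0_d1).
Qed.

Lemma squarefree_index_normalized_basis u v : squarefree f -> zbasis3 O 1 u v ->
  exists (w t : kc) (c : int),
    [/\ zbasis3 Ok 1 w t, kseteq O (zspan3 1 (w *+ f) t) & w * t = c%:~R].
Proof.
move=> sqf /(squarefree_index_basis sqf) [w [t [Ok_basis O_span]]].
have [n [m [c wtE]]] := normalizing_shift Ok_basis.
exists (w - n%:~R), (t - m%:~R), c; split=> //.
  split=> [x|]; last exact: zfree3_shift (proj2 Ok_basis).
  by have := zspan3_shift w t n m 1 x; rewrite !mulr1n => ->; exact: (proj1 Ok_basis x).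
by move=> x; rewrite zspan3_shift; exact: (O_span x).
Qed.

Section Conductor.
Variables (w t : kc) (c : int).
Hypotheses (Ok_basis : zbasis3 Ok 1 w t) (O_span : kseteq O (zspan3 1 (w *+ f) t)).
Hypothesis wtE : w * t = c%:~R.

Local Notation C := (zspan3 f%:R (w *+ f) t).

Lemma Ok_span (x : kc) : Ok x <-> exists a b d : int, x = a%:~R + w *~ b + t *~ d.
Proof. by rewrite (proj1 Ok_basis x) zspan3E. Qed.

Lemma O_coord (a b d : int) : O (a%:~R + w *~ b + t *~ d) <-> (f%:Z %| b)%Z.
Proof.
rewrite (O_span _) zspan3E; split=> [[a' [b' [d' e]]]|/dvdzP [q ->]].
  have e' : a%:~R + w *~ b + t *~ d = a'%:~R + w *~ (b' * f%:Z) + t *~ d'.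
    by rewrite e !pmulrn; ring.
  by have [_ -> _] := zfree3_inj (proj2 Ok_basis) e'; apply: dvdz_mull.
by exists a, q, d; rewrite !pmulrn; ring.
Qed.

Lemma conductor_coord (a b d : int) :
  C (a%:~R + w *~ b + t *~ d) <-> (f%:Z %| a)%Z /\ (f%:Z %| b)%Z.
Proof.
rewrite zspan3E; split=> [[a' [b' [d' e]]]|[/dvdzP [p ->] /dvdzP [q ->]]].
  have e' : a%:~R + w *~ b + t *~ d = (a' * f%:Z)%:~R + w *~ (b' * f%:Z) + t *~ d'.
    by rewrite e !pmulrn; ring.
  by have [-> -> _] := zfree3_inj (proj2 Ok_basis) e'; split; apply: dvdz_mull.
by exists p, q, d; rewrite !pmulrn; ring.
Qed.

Lemma Ow : Ok w. Proof. by apply/Ok_span; exists 0, 1, 0; ring. Qed.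
Lemma Ot : O t. Proof. by apply/O_span/zspan3E; exists 0, 0, 1; ring. Qed.

Lemma conductor_O (x : kc) : C x -> O x.
Proof.
case/zspan3E=> a [b [d ->]]; apply/O_span/zspan3E.
by exists (a * f%:Z), b, d; rewrite !pmulrn; ring.
Qed.

Lemma O_mulw_conductor (x : kc) : C x -> O (w * x).
Proof.
case/zspan3E=> a [b [d ->]]; have [p0 [p1 [p2 wwE]]] := proj1 (Ok_span _) (maxorderM Ow Ow).
have -> : w * (f%:R *~ a + w *+ f *~ b + t *~ d) =
    (b * f%:Z * p0 + d * c)%:~R + w *~ (a * f%:Z + b * f%:Z * p1) + t *~ (b * f%:Z * p2).
  transitivity (w *~ (a * f%:Z) + (w * w) *~ (b * f%:Z) + (w * t) *~ d).
    by rewrite !pmulrn; ring.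
  by rewrite wwE wtE; ring.
apply/O_coord; apply: rpredD; [exact: dvdz_mull (dvdzz _) | exact/dvdz_mulr/dvdz_mull/dvdzz].
Qed.

Lemma conductor_of_mulw (x : kc) : O x -> O (x * w) -> C x.
Proof.
case/O_span/zspan3E=> a [b [d ->]]; have [p0 [p1 [p2 wwE]]] := proj1 (Ok_span _) (maxorderM Ow Ow).
have -> : (a%:~R + w *+ f *~ b + t *~ d) * w =
    (b * f%:Z * p0 + d * c)%:~R + w *~ (a + b * f%:Z * p1) + t *~ (b * f%:Z * p2).
  transitivity (w *~ a + (w * w) *~ (b * f%:Z) + (w * t) *~ d); first by rewrite !pmulrn; ring.
  by rewrite wwE wtE; ring.
move/O_coord => f_dvd_a; have -> : a%:~R + w *+ f *~ b + t *~ d = a%:~R + w *~ (b * f%:Z) + t *~ d.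
  by rewrite !pmulrn; ring.
apply/conductor_coord; split; last exact: dvdz_mull.
by rewrite -(addrK (b * f%:Z * p1) a) rpredB //; exact/dvdz_mulr/dvdz_mull/dvdzz.
Qed.

Lemma O_mulr_conductor (x r : kc) : C x -> Ok r -> O (r * x).
Proof.
move=> Cx /Ok_span [r0 [r1 [r2 ->]]].
have -> : (r0%:~R + w *~ r1 + t *~ r2) * x = x *~ r0 + (w * x) *~ r1 + (t * x) *~ r2 by ring.
have Ox := conductor_O Cx.
by do !apply: O_add; apply: O_mulz; [exact: Ox | exact: O_mulw_conductor | exact: OM Ot Ox].
Qed.

Lemma conductor_ideal : ideal_of Ok C.
Proof.
split=> [x /conductor_O/O_Ok //||x y|r x Ok_r Cx].
- by apply/zspan3E; exists 0, 0, 0; rewrite !mulr0z !addr0.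
- case/zspan3E=> a [b [d ->]] /zspan3E [a' [b' [d' ->]]].
  by apply/zspan3E; exists (a - a'), (b - b'), (d - d'); ring.
apply: conductor_of_mulw; first exact: O_mulr_conductor.
by rewrite mulrAC; apply: O_mulr_conductor (maxorderM Ok_r Ow).
Qed.

Lemma conductorP : is_conductor O C.
Proof.
split=> [|x|I [_ _ _ IM] I_O x Ix]; [exact: conductor_ideal | exact: conductor_O |].
by apply: conductor_of_mulw (I_O _ Ix) _; rewrite mulrC; apply/I_O/IM => //; exact: Ow.
Qed.

Lemma O_Zplus_conductor : kseteq O (Zplus C).
Proof.
move=> x; split=> [/O_span [a [b [d ->]]]|[n _ [y Cy ->]]].
  exists a => //; exists (f%:R *~ 0 + (w *+ f) *~ b + t *~ d); first by exists 0, b, d.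
  by rewrite mulr0z add0r addrA.
exact: O_add (O_int n) (conductor_O Cy).
Qed.

Let rep (ij : 'I_f * 'I_f) : kc := (ij.1%:Z)%:~R + w *~ ij.2%:Z.

Lemma conductor_index : has_index Ok C (f ^ 2)%N.
Proof.
suff : has_index Ok C #|{: 'I_f * 'I_f}| by rewrite card_prod card_ord mulnn.
apply: (has_index_codom (r := rep)).
- by move=> ij; apply: maxorderD; [exact: maxorder_int | exact: maxorderMz Ow].
- move=> [i j] [i' j']; rewrite /rep /=.
  have -> : (i%:Z)%:~R + w *~ j%:Z - ((i'%:Z)%:~R + w *~ j'%:Z) =
      (i%:Z - i'%:Z)%:~R + w *~ (j%:Z - j'%:Z) + t *~ 0 by ring.
  case/conductor_coord => /(@dvdz_lt_eq f%:Z _ _ (ltn_ord i) (ltn_ord i')) ii.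
  move=> /(@dvdz_lt_eq f%:Z _ _ (ltn_ord j) (ltn_ord j')) jj.
  by congr pair; apply: val_inj.
move=> x /Ok_span [a [b [d ->]]].
exists (Ordinal (absz_modz_lt a f_neq0), Ordinal (absz_modz_lt b f_neq0)); rewrite /rep /=.
rewrite !gez0_abs ?modz_ge0 ?f_neq0 //.
have -> : a%:~R + w *~ b + t *~ d - ((a %% f%:Z)%Z%:~R + w *~ (b %% f%:Z)%Z) =
    (a - (a %% f%:Z)%Z)%:~R + w *~ (b - (b %% f%:Z)%Z) + t *~ d by ring.
apply/conductor_coord; split; apply/dvdzP; [exists (a %/ f%:Z)%Z | exists (b %/ f%:Z)%Z].
  by rewrite {1}(divz_eq a f%:Z) addrK.
by rewrite {1}(divz_eq b f%:Z) addrK.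
Qed.

End Conductor.

End Order.
End Commutative.

Theorem proposition2p4 (k : falgType rat) (O : kset k) (f : nat) :
  etale_cubic k ->
  cubic_ring O ->
  ksubset O (maxorder k) ->
  has_index (maxorder k) O f ->
  squarefree f ->
  exists w t : k,
    [/\ zbasis3 (maxorder k) 1 w t, normalized w t,
        kseteq O (zspan3 1 (w *+ f) t) &
        is_conductor O (zspan3 f%:R (w *+ f) t)] /\
    kseteq O (Zplus (zspan3 f%:R (w *+ f) t)) /\
    has_index (maxorder k) (zspan3 f%:R (w *+ f) t) (f ^ 2)%N.
Proof.
move=> [kC _ _] [O1 OB OM [b1 [b2 [b3 Ob]]]] O_Ok Oindex sqf.
have [u [v uv_basis]] := cubic_ring_basis1 kC O1 O_Ok Ob.
have [w [t [c [Ok_basis O_span wtE]]]] :=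
  squarefree_index_normalized_basis kC O1 OB O_Ok Oindex sqf uv_basis.
exists w, t; split; [split|split] => //.
- by exists c.
- exact: (conductorP kC O1 OB OM O_Ok Ok_basis O_span wtE).
- exact: (O_Zplus_conductor kC O1 OB O_span).
- exact: (conductor_index kC Oindex Ok_basis).
Qed.
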